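(* Let $A, N_1,\dots,N_m\in\mathbb R^{n\times n}$, $u=(u_1,\dots,u_m)^T\in L^2$, $s\ge 0$ and $x_0\in\mathbb R^n$. Let $x(t)$, $t\ge s$, denote the solution to the homogeneous bilinear equation $$\dot x(t)=Ax(t)+\sum_{k=1}^m N_k x(t)u_k(t),\qquad x(s)=x_0.$$ Then $X(t):=x(t)x^T(t)$, $t\ge s$, satisfies $X(s)=x_0x_0^T$ and the matrix differential inequality $$\dot X(t)\le AX(t)+X(t)A^T+\sum_{k=1}^m N_kX(t)N_k^T+X(t)\|u^0(t)\|_2^2 .$$
   Context: For symmetric matrices $K,L$, $K\le L$ means $L-K$ is symmetric positive semidefinite. $L^2$ is the set of $u:[0,\infty)\to\mathbb R^m$ with $\int_0^\infty u^T(s)u(s)\,ds<\infty$. The vector $u^0=(u^0_1,\dots,u^0_m)^T$ is defined by $u^0_k\equiv 0$ if $N_k=0$ and $u^0_k=u_k$ otherwise. *)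

From HB Require Import structures.
From mathcomp Require Import all_boot all_order all_algebra.
From mathcomp Require Import all_classical all_reals all_analysis.
Set Implicit Arguments. Unset Strict Implicit. Unset Printing Implicit Defensive.
Import Order.TTheory GRing.Theory Num.Theory.
Import numFieldNormedType.Exports.
Local Open Scope classical_set_scope.
Local Open Scope ring_scope.

(* K <= L in the Loewner order: L - K symmetric positive semidefinite.
   We define "M is symmetric positive semidefinite". *)
Definition psd (R : realType) (n : nat) (M : 'M[R]_n) : Prop :=
  M^T = M /\ forall v : 'cV[R]_n, 0 <= (v^T *m M *m v) 0 0.

Definition L2 (R : realType) (m : nat) (u : 'I_m -> R -> R) : Prop :=
  (forall k, measurable_fun [set` `[(0:R), +oo[%R] (u k)) /\
  (\int[lebesgue_measure]_(t in [set` `[(0:R), +oo[%R])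
      ((\sum_(k < m) u k t ^+ 2)%:E) < +oo)%E.

(* ||u^0(t)||_2^2, where u^0_k = 0 if N_k = 0 and u^0_k = u_k otherwise. *)
Definition u0norm2 (R : realType) (n m : nat) (N : 'I_m -> 'M[R]_n)
  (u : 'I_m -> R -> R) (t : R) : R :=
  \sum_(k < m | N k != 0) u k t ^+ 2.

From HB Require Import structures.
From mathcomp Require Import all_boot all_order all_algebra.
From mathcomp Require Import all_classical all_reals all_analysis.
Import Order.TTheory GRing.Theory Num.Theory.
Import numFieldNormedType.Exports.
Local Open Scope classical_set_scope.
Local Open Scope ring_scope.

(* With y the drift of the equation, X' = y x^T + x y^T. Since the terms with
   N_k = 0 do not contribute to y, u may be replaced by u^0 in y, and then the
   right-hand side minus X' is the Gram sum
   sum_k (N_k x - u^0_k x) (N_k x - u^0_k x)^T, which is positive semidefinite. *)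

Section PositiveSemidefinite.
Context {R : realType} {n : nat}.

Lemma psd0 : psd (0 : 'M[R]_n).
Proof. by split=> [|v]; rewrite ?trmx0 // mulmx0 mul0mx mxE. Qed.

Lemma psdD (K L : 'M[R]_n) : psd K -> psd L -> psd (K + L).
Proof.
move=> [KT K0] [LT L0]; split=> [|v]; first by rewrite linearD /= KT LT.
by rewrite mulmxDr mulmxDl mxE addr_ge0.
Qed.

Lemma psd_sum (I : Type) (r : seq I) (P : pred I) (F : I -> 'M[R]_n) :
  (forall i, P i -> psd (F i)) -> psd (\sum_(i <- r | P i) F i).
Proof. by move=> psdF; apply: big_ind => //; [exact: psd0 | exact: psdD]. Qed.

Lemma psd_mul_tr (p : nat) (w : 'M[R]_(n, p)) : psd (w *m w^T).
Proof.
split=> [|v]; first by rewrite trmx_mul trmxK.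
have -> : v^T *m (w *m w^T) *m v = (v^T *m w) *m (v^T *m w)^T.
  by rewrite trmx_mul trmxK !mulmxA.
by rewrite mxE; apply: sumr_ge0 => l _; rewrite !mxE -expr2 sqr_ge0.
Qed.

End PositiveSemidefinite.

Section GramIdentity.
Context {R : realType} {n m : nat}.
Variables (A : 'M[R]_n) (N : 'I_m -> 'M[R]_n).
Variables (a : 'cV[R]_n) (c : 'I_m -> R).

Let X := a *m a^T.

Lemma mul_tr_subZ (M : 'M[R]_n) (d : R) :
  (M *m a - d *: a) *m (M *m a - d *: a)^T
  = M *m X *m M^T - d *: (M *m X + X *m M^T) + d ^+ 2 *: X.
Proof.
have trZ : (d *: a)^T = d *: a^T by exact: linearZ.
rewrite (linearB (@trmx R n 1)) /= trZ trmx_mul mulmxDl !mulmxDr.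
rewrite !mulmxN !mulNmx opprK.
rewrite -!scalemxAl -!scalemxAr scalerA -expr2 /X !mulmxA scalerDr opprD.
by rewrite !addrA.
Qed.

Lemma gram_identity :
  let y := A *m a + \sum_(k < m) c k *: (N k *m a) in
  A *m X + X *m A^T + \sum_(k < m) (N k *m X *m (N k)^T)
    + (\sum_(k < m) c k ^+ 2) *: X - (y *m a^T + a *m y^T)
  = \sum_(k < m) (N k *m a - c k *: a) *m (N k *m a - c k *: a)^T.
Proof.
move=> y.
have -> : y *m a^T + a *m y^T
    = A *m X + X *m A^T + \sum_(k < m) c k *: (N k *m X + X *m (N k)^T).
  rewrite /y linearD /= linear_sum /= mulmxDl mulmxDr mulmx_suml mulmx_sumr.
  rewrite /X trmx_mul !mulmxA addrACA -big_split /=; congr (_ + _ + _).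
  apply: eq_bigr => k _.
  by rewrite linearZ /= trmx_mul -scalemxAl -scalemxAr scalerDr !mulmxA.
under [RHS]eq_bigr => k _ do rewrite mul_tr_subZ.
rewrite !big_split /= sumrN scaler_suml.
set P := A *m X + X *m A^T.
by rewrite opprD addrA (addrAC _ _ (- P)) (addrAC P _ (- P)) subrr add0r addrAC.
Qed.

End GramIdentity.

Section OuterProductDerivative.
Context {R : realType} {n : nat} {x : R -> 'cV[R]_n} {t : R}.
Hypothesis dx : forall i, derivable (fun r => x r i 0) t 1.

Let entry_mul_tr i j :
  (fun r => (x r *m (x r)^T) i j) = ((fun r => x r i 0) * (fun r => x r j 0))%R.
Proof. by apply: funext => r; rewrite !mxE big_ord1 mxE. Qed.

Lemma derivable_mul_tr i j : derivable (fun r => (x r *m (x r)^T) i j) t 1.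
Proof. by rewrite entry_mul_tr; exact: derivableM. Qed.

Lemma derive_mul_tr {x' : 'cV[R]_n} :
  (forall i, 'D_1 (fun r => x r i 0) t = x' i 0) ->
  \matrix_(i, j) 'D_1 (fun r => (x r *m (x r)^T) i j) t
  = x' *m (x t)^T + x t *m x'^T.
Proof.
move=> Dx; apply/matrixP => i j.
rewrite mxE entry_mul_tr (deriveM (dx i) (dx j)) !Dx !mxE !big_ord1 !mxE /=.
by rewrite addrC; congr (_ + _); exact: mulrC.
Qed.

End OuterProductDerivative.

Definition u0 {R : realType} {n m : nat} (N : 'I_m -> 'M[R]_n)
    (u : 'I_m -> R -> R) (k : 'I_m) (t : R) : R :=
  if N k == 0 then 0 else u k t.

Section ActiveInputs.
Context {R : realType} {n m : nat}.
Variables (N : 'I_m -> 'M[R]_n) (u : 'I_m -> R -> R).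

Lemma u0norm2E t : u0norm2 N u t = \sum_(k < m) u0 N u k t ^+ 2.
Proof.
rewrite /u0norm2 big_mkcond; apply: eq_bigr => k _.
by rewrite /u0; case: eqP => //; rewrite expr0n.
Qed.

Lemma drift_u0 t (v : 'cV[R]_n) :
  \sum_(k < m) u k t *: (N k *m v) = \sum_(k < m) u0 N u k t *: (N k *m v).
Proof.
by apply: eq_bigr => k _; rewrite /u0; case: eqP => // ->; rewrite mul0mx !scaler0.
Qed.

End ActiveInputs.

Theorem lemma2p2 (R : realType) (n m : nat) (A : 'M[R]_n)
  (N : 'I_m -> 'M[R]_n) (u : 'I_m -> R -> R) (s : R) (x0 : 'cV[R]_n)
  (x : R -> 'cV[R]_n) :
  L2 u -> 0 <= s -> x s = x0 ->
  let X := fun t => x t *m (x t)^T in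
  X s = x0 *m x0^T /\
  forall t, s <= t ->
    (forall i, derivable (fun r => x r i 0) t 1 /\
       'D_1 (fun r => x r i 0) t
         = (A *m x t + \sum_(k < m) u k t *: (N k *m x t)) i 0) ->
    (forall i j, derivable (fun r => X r i j) t 1) /\
    psd (A *m X t + X t *m A^T + \sum_(k < m) (N k *m X t *m (N k)^T)
         + u0norm2 N u t *: X t
         - \matrix_(i, j) 'D_1 (fun r => X r i j) t).
Proof.
move=> _ _ xs X; split; first by rewrite /X xs.
move=> t _ hx; have dx i := (hx i).1.
split; first exact: derivable_mul_tr dx.
rewrite /X (derive_mul_tr dx (fun i => (hx i).2)) drift_u0 u0norm2E.
rewrite gram_identity.
by apply: psd_sum => k _; exact: psd_mul_tr.
Qed.
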